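(* Suppose $D_X$ is $(2,L,R,U,\beta)$-well-behaved and $D$ satisfies the $(B,\alpha)$-geometric Tsybakov noise condition with respect to $w^\star$. Then for all $t\in[0,\frac12)$ and $\gamma>0$, \[\Pr\big(\tfrac12-\eta(x)\le t\big)\le4U\beta\Big(\frac tB\Big)^{\frac\alpha{1-\alpha}}\ln\frac e\gamma+\gamma,\] and furthermore \[\Pr\big(\tfrac12-\eta(x)\le t\big)\le4U\beta\Big(\frac tB\Big)^{\frac\alpha{1-\alpha}}\ln\Big(\frac{2}{U\beta(\frac tB)^{\frac\alpha{1-\alpha}}}\Big).\]
   Context: $D$ is a distribution on $\mathbb{R}^d\times\{-1,+1\}$ with marginal $D_X$; $w^\star$ is a unit vector and $\eta(x)=\Pr_D(y\ne\mathrm{sign}(\langle w^\star,x\rangle)\mid x)$. $D_X$ is $(2,L,R,U,\beta)$-well-behaved if for every 2-dimensional subspace $V$ the projection of $x\sim D_X$ onto $V$ (orthonormal coordinates) has density $p_V$ with $p_V(z)\ge L$ for $\|z\|_2\le R$ and $p_V\le U$ everywhere, and $\Pr(|\langle w,x\rangle|\ge t)\le\exp(1-t/\beta)$ for all unit $w$, $t>0$. $(B,\alpha)$-geometric Tsybakov noise ($B>0$, $\alpha\in(0,1]$): for all $x$, $\frac12-\eta(x)\ge\min(\frac12,B|\langle w^\star,x\rangle|^{\frac{1-\alpha}{\alpha}})$.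
   Formalization: The first bound holds for 0 < γ ≤ e only, and the second bound is asserted only when $U\beta(\frac tB)^{\frac\alpha{1-\alpha}}\le1$. The statement above fails without it. *)

(* R^d is modelled as d.-tuple R with the product
   (= Borel) sigma-algebra; R^2 = R * R with the product sigma-algebra. *)
From HB Require Import structures.
From mathcomp Require Import all_boot all_order all_algebra.
From mathcomp Require Import all_classical all_reals all_analysis.
Set Implicit Arguments. Unset Strict Implicit. Unset Printing Implicit Defensive.
Import Order.TTheory GRing.Theory Num.Theory.
Local Open Scope classical_set_scope.
Local Open Scope ring_scope.

Section defs.
Variable R : realType.
Variable d : nat.

Definition dotp (u x : d.-tuple R) : R := \sum_(i < d) tnth u i * tnth x i.

Definition unitv (u : d.-tuple R) : Prop := dotp u u = 1.

Definition orthonormal2 (u1 u2 : d.-tuple R) : Prop :=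
  [/\ dotp u1 u1 = 1, dotp u2 u2 = 1 & dotp u1 u2 = 0].

(* orthonormal coordinates of the projection of x onto span(u1,u2) *)
Definition proj2 (u1 u2 : d.-tuple R) (x : d.-tuple R) : R * R :=
  (dotp u1 x, dotp u2 x).

Definition is_density2 (P : probability (d.-tuple R) R) (f : d.-tuple R -> (R * R)%type)
    (p : (R * R)%type -> R) : Prop :=
  measurable_fun setT p /\ (forall z, 0 <= p z) /\
  forall A : set (R * R)%type, measurable A ->
    P (f @^-1` A) =
    (\int[(@lebesgue_measure R \x @lebesgue_measure R)%E]_(z in A) (p z)%:E)%E.

Definition well_behaved (P : probability (d.-tuple R) R) (L Rad U beta : R) : Prop :=
  [/\ 0 < L, 0 < Rad, 0 < U & 0 < beta] /\
  (forall u1 u2, orthonormal2 u1 u2 ->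
     exists p : (R * R)%type -> R, is_density2 P (proj2 u1 u2) p /\
       (forall z, Num.sqrt (z.1 ^+ 2 + z.2 ^+ 2) <= Rad -> L <= p z) /\
       (forall z, p z <= U)) /\
  (forall w, unitv w -> forall t : R, 0 < t ->
     (P [set x | (t <= `|dotp w x|)%R] <= (expR (1 - t / beta))%:E)%E).

(* label convention: true = +1, false = -1; sign(z) = +1 iff z >= 0 *)
Definition sgnb (z : R) : bool := 0 <= z.

(* eta is (a version of) the conditional probability Pr_D(y <> sign<w*,x> | x),
   and P is the x-marginal of D *)
Definition noise_fun (D : probability (d.-tuple R * bool)%type R)
    (P : probability (d.-tuple R) R) (wstar : d.-tuple R)
    (eta : d.-tuple R -> R) : Prop :=
  (forall A, measurable A -> P A = D (A `*` setT)) /\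
  measurable_fun setT eta /\ (forall x, 0 <= eta x <= 1) /\
  forall A, measurable A ->
    D [set xy | A xy.1 /\ xy.2 <> sgnb (dotp wstar xy.1)] =
    (\int[P]_(x in A) (eta x)%:E)%E.

Definition geom_tsybakov (wstar : d.-tuple R) (eta : d.-tuple R -> R)
    (B alpha : R) : Prop :=
  forall x, Num.min (1/2) (B * `|dotp wstar x| `^ ((1 - alpha) / alpha))
            <= 1/2 - eta x.

End defs.

From mathcomp Require Import all_boot all_order all_algebra.
From mathcomp Require Import all_classical all_reals all_analysis.
From mathcomp Require Import ring lra measurable_realfun measurable_fun_approximation.
Import Order.TTheory GRing.Theory Num.Theory.
Local Open Scope classical_set_scope.
Local Open Scope ring_scope.

(* On the event [1/2 - eta x <= t] the Tsybakov condition forces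
   [|<w*, x>| <= s = (t/B)^(alpha/(1-alpha))].  Complete [w*] to an orthonormal
   pair [(w*, v)] and cut this slab at [|<v, x>| = T = beta ln (e/gamma)]: the part
   inside the rectangle [[-s, s] x [-T, T]] has mass at most [U * 4 s T] by the
   density bound on the two-dimensional marginal, and the rest has mass at most
   [exp (1 - T/beta) = gamma] by the tail bound.  For the second inequality take
   [gamma = 4 U beta s] when this is below [e] (this needs [ln 2 >= 2/3]);
   otherwise the right-hand side is already at least 1. *)

Lemma ln2_ge (R : realType) : 2 / 3 <= ln (2 : R).
Proof.
(* [1 - 1/18 <= expR (-1/18)] gives [expR (1/18) <= 18/17], and [(18/17)^12 <= 2]. *)
have exp_le : expR (1 / 18 : R) <= 18 / 17.
  have := expR_ge1Dx (- (1 / 18) : R); rewrite expRN => inv_ge.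
  rewrite -[X in X <= _]invrK -[18 / 17]invf_div.
  by rewrite lef_pV2 ?posrE ?invr_gt0 ?expR_gt0 //; lra.
have exp23_le : expR (2 / 3 : R) <= 2.
  rewrite (_ : 2 / 3 = 1 / 18 * 12%:R); last by lra.
  rewrite expRM_natr; apply: le_trans (_ : (18 / 17 : R) ^+ 12 <= 2); last by lra.
  by apply: lerXn2r; rewrite ?nnegrE ?expR_ge0 //; lra.
by rewrite -ler_expR lnK // posrE; lra.
Qed.

Lemma two_le_expR1 (R : realType) : 2 <= expR (1 : R).
Proof. by have := expR_ge1Dx (1 : R); lra. Qed.

Lemma ln_e_div_4x_le (R : realType) (x : R) : 0 < x ->
  4 * x * ln (expR 1 / (4 * x)) + 4 * x <= 4 * x * ln (2 / x).
Proof.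
move=> x0; have := ln2_ge R.
rewrite ln_div ?posrE ?expR_gt0 ?mulr_gt0 // expRK lnM ?posrE //.
rewrite (_ : 4 = 2 * 2); last by lra.
rewrite lnM ?posrE // ln_div ?posrE //; nra.
Qed.

Lemma one_le_4x_ln_2_div (R : realType) (x : R) : x <= 1 -> expR 1 <= 4 * x ->
  1 <= 4 * x * ln (2 / x).
Proof.
move=> x1 ex; have := ln2_ge R; have := two_le_expR1 R.
have x0 : 0 < x by have := expR_gt0 (1 : R); lra.
have : ln 2 <= ln (2 / x) by rewrite ler_ln ?posrE ?divr_gt0 // ler_pdivlMr //; nra.
nra.
Qed.

Lemma expR_tail_level (R : realType) (beta gamma : R) : 0 < beta -> 0 < gamma ->
  expR (1 - beta * ln (expR 1 / gamma) / beta) = gamma.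
Proof.
move=> beta0 gamma0; rewrite mulrAC divff ?gt_eqF // mul1r.
by rewrite ln_div ?posrE ?expR_gt0 // expRK opprB addrC subrK lnK.
Qed.

Lemma le_4x_ln_2_div (R : realType) (m : \bar R) (x : R) : 0 <= x -> x <= 1 ->
  (m <= 1)%E ->
  (forall gamma, 0 < gamma <= expR 1 ->
     (m <= (4 * x * ln (expR 1 / gamma) + gamma)%:E)%E) ->
  (m <= (4 * x * ln (2 / x))%:E)%E.
Proof.
move=> x0 x1 m1 mle.
have [x_eq0|x_neq0] := eqVneq x 0.
  subst x; rewrite mulr0 mul0r; apply/lee_addgt0Pr => e e0; rewrite add0e.
  have min_gt0 : 0 < Num.min e (expR 1) by rewrite lt_min e0 expR_gt0.
  apply: (le_trans (mle (Num.min e (expR 1)) _)).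
    by rewrite min_gt0 ge_min lexx orbT.
  by rewrite mulr0 mul0r add0r lee_fin ge_min lexx.
have xp : 0 < x by rewrite lt_def x_neq0.
have [small|large] := ltrP (4 * x) (expR 1).
  apply: (le_trans (mle (4 * x) _)); first by rewrite mulr_gt0 // ltW.
  by rewrite lee_fin ln_e_div_4x_le.
by apply: (le_trans m1); rewrite lee_fin one_le_4x_ln_2_div.
Qed.

Section inner_product.
Context {R : realType} {d : nat}.
Implicit Types (u v w : d.-tuple R).

Lemma measurable_dotp u : measurable_fun setT (dotp u).
Proof.
apply: measurable_sum => i.
by apply: measurable_funM => //; exact: measurable_tnth.
Qed.

Lemma measurable_norm_dotp u : measurable_fun setT (fun x => `|dotp u x|).
Proof. exact: measurableT_comp (measurable_dotp u). Qed.

Lemma exists_small_coord (hd : (2 <= d)%N) {w} : unitv w ->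
  exists j : 'I_d, tnth w j ^+ 2 <= 1 / 2.
Proof.
rewrite /unitv /dotp => w1.
have d0 : (0 < d)%N by apply: leq_trans hd.
pose j0 := Ordinal d0; pose j1 := Ordinal hd.
have two_le : tnth w j0 ^+ 2 + tnth w j1 ^+ 2 <= 1.
  rewrite -w1 (bigD1 j0) //= (bigD1 j1) //= addrA !expr2 lerDl.
  by apply: sumr_ge0 => i _; rewrite -expr2 sqr_ge0.
have [|] := lerP (tnth w j0 ^+ 2) (1 / 2); first by exists j0.
by exists j1; lra.
Qed.

(* With [a = w_j], the vector [c (e_j - a w)] is orthogonal to [w], and
   [c = (1 - a^2)^(-1/2)] normalizes it. *)
Lemma exists_orthonormal2 (hd : (2 <= d)%N) {w} : unitv w -> exists v, orthonormal2 w v.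
Proof.
move=> w1; have [j ja] := exists_small_coord hd w1; move: w1 ja.
rewrite /unitv /dotp; set a := tnth w j => w1 ja.
pose c := (Num.sqrt (1 - a ^+ 2))^-1.
have c2 : c ^+ 2 * (1 - a ^+ 2) = 1.
  by rewrite exprVn sqr_sqrtr ?mulVf ?gt_eqF //; lra.
have delta F : \sum_(i < d) (i == j)%:R * F i = F j :> R.
  by rewrite (bigD1 j) //= eqxx mul1r big1 ?addr0 // => i /negbTE ->; rewrite mul0r.
exists [tuple c * ((i == j)%:R - a * tnth w i) | i < d].
split; rewrite /dotp // -?/a.
- rewrite (eq_bigr (fun i => c ^+ 2 * ((i == j)%:R * (1 - 2 * a * tnth w i))
                          + c ^+ 2 * a ^+ 2 * (tnth w i * tnth w i))); last first.
    move=> i _; rewrite tnth_mktuple.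
    by have [->|_] := eqVneq i j; rewrite ?mulr1n ?mulr0n /a; ring.
  by rewrite big_split /= -!mulr_sumr delta w1 -/a; lra.
- rewrite (eq_bigr (fun i => c * ((i == j)%:R * tnth w i) - c * a * (tnth w i * tnth w i))).
    by rewrite sumrB -!mulr_sumr delta w1 -/a; ring.
  by move=> i _; rewrite tnth_mktuple; ring.
Qed.

End inner_product.

Lemma lebesgue_measure_itv_sym (R : realType) (a : R) : 0 <= a ->
  @lebesgue_measure R [set` `[-a, a]] = (a *+ 2)%:E.
Proof.
move=> a0; rewrite lebesgue_measure_itv /= lte_fin.
case: ltrP => [_|aN]; first by rewrite -EFinB opprK mulr2n.
by rewrite (_ : a = 0) ?mul0rn //; lra.
Qed.

Section slab.
Context {R : realType} {d : nat} {P : probability (d.-tuple R) R}.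
Implicit Types w : d.-tuple R.

Definition centered_rect (a b : R) : set (R * R) :=
  [set` `[-a, a]] `*` [set` `[-b, b]].

Lemma measurable_centered_rect a b : measurable (centered_rect a b).
Proof. by apply: measurableX; exact: measurable_itv. Qed.

Lemma density2_le_rect {f : d.-tuple R -> (R * R)%type} {p} {U a b : R} :
  is_density2 P f p -> (forall z, p z <= U) -> 0 <= a -> 0 <= b ->
  (P (f @^-1` centered_rect a b) <= (U * (a *+ 2) * (b *+ 2))%:E)%E.
Proof.
move=> [mp [p0 Pf]] pU a0 b0.
rewrite Pf; last exact: measurable_centered_rect.
apply: (@le_trans _ _
  (\int[(@lebesgue_measure R \x @lebesgue_measure R)%E]_(z in centered_rect a b) U%:E)%E).
  apply: ge0_le_integral => //.
  - exact: measurable_centered_rect.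
  - by move=> z _; rewrite lee_fin.
  - by apply/measurable_EFinP; exact: measurable_funTS.
  - by move=> z _; rewrite lee_fin.
have rect_measure : ((@lebesgue_measure R \x @lebesgue_measure R)%E (centered_rect a b)
    = ((a *+ 2) * (b *+ 2))%:E)%E.
  rewrite product_measure1E // EFinM.
  by rewrite -(@lebesgue_measure_itv_sym R b b0) -(@lebesgue_measure_itv_sym R a a0).
have := integral_cst (@lebesgue_measure R \x @lebesgue_measure R)%E
  (measurable_centered_rect a b) U%:E.
set rect_mass := (X in (_ = (_ * X)%E) -> _).
have -> : rect_mass = ((a *+ 2) * (b *+ 2))%:E by exact: rect_measure.
by move=> ->; rewrite -!EFinM mulrA.
Qed.

Lemma slab_mass_le (hd : (2 <= d)%N) {w} {L Rad U beta s : R} {A} :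
  unitv w -> well_behaved P L Rad U beta -> measurable A ->
  A `<=` [set x | `|dotp w x| <= s] -> 0 <= s ->
  forall gamma, 0 < gamma <= expR 1 ->
  (P A <= (4 * U * beta * s * ln (expR 1 / gamma) + gamma)%:E)%E.
Proof.
move=> w1 [[L0 Rad0 U0 beta0] [density tail]] mA A_slab s0 gamma /andP[gamma0].
rewrite le_eqVlt => /orP[/eqP gammae|gamma_lt].
  rewrite gammae divff ?gt_eqF ?expR_gt0 // ln1 mulr0 add0r.
  apply: (le_trans (probability_le1 _ mA)).
  by rewrite lee_fin; have := two_le_expR1 R; lra.
have [v [_ v1 wv]] := exists_orthonormal2 hd w1.
have [p [dens_p [_ pU]]] := density w v (And3 w1 v1 wv).
set T := beta * ln (expR 1 / gamma).
have T0 : 0 < T by rewrite mulr_gt0 // ln_gt0 // ltr_pdivlMr // mul1r.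
have m_rect : measurable (proj2 w v @^-1` centered_rect s T).
  rewrite -[X in measurable X]setTI.
  apply: measurable_fun_pair; [exact: measurable_dotp.. | exact: measurableT |].
  exact: measurable_centered_rect.
have m_tail : measurable [set x | T <= `|dotp v x|].
  rewrite -[X in measurable X]setTI.
  exact: measurable_fun_le (measurable_cst T) (measurable_norm_dotp v).
have A_sub : A `<=` proj2 w v @^-1` centered_rect s T `|` [set x | T <= `|dotp v x|].
  move=> x /A_slab /= wx; have [vx|/ltW] := lerP `|dotp v x| T; last by right.
  by left; split; rewrite /= in_itv /= -ler_norml.
apply: (le_trans (le_measure _ _ _ A_sub)); rewrite ?inE //; first exact: measurableU.
apply: (le_trans (measureU2 _ m_rect m_tail)); rewrite EFinD; apply: leeD.
  apply: (le_trans (density2_le_rect dens_p pU s0 (ltW T0))).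
  by rewrite lee_fin /T le_eqVlt; apply/orP; left; apply/eqP; ring.
by have := tail v v1 T T0; rewrite /T expR_tail_level.
Qed.

End slab.

Lemma geom_tsybakov_slab {R : realType} {d} {w : d.-tuple R} {eta} {B alpha t : R} x :
  geom_tsybakov w eta B alpha -> 0 < B -> 0 < alpha < 1 -> 0 <= t < 1 / 2 ->
  1 / 2 - eta x <= t -> `|dotp w x| <= (t / B) `^ (alpha / (1 - alpha)).
Proof.
move=> tsyb B0 /andP[alpha0 alpha1] /andP[t0 t_lt] etax.
set q := (1 - alpha) / alpha.
have q0 : 0 <= q by apply: divr_ge0; lra.
have Bq_le : B * `|dotp w x| `^ q <= t.
  by move: (tsyb x); rewrite ge_min => /orP[|]; lra.
have q_inv : q * (alpha / (1 - alpha)) = 1.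
  by rewrite /q mulrA divfK ?gt_eqF // divff // gt_eqF //; lra.
have -> : `|dotp w x| = (`|dotp w x| `^ q) `^ (alpha / (1 - alpha)).
  by rewrite -powRrM q_inv powRr1.
apply: ge0_ler_powR;
  rewrite ?nnegrE ?powR_ge0 ?divr_ge0 ?subr_ge0 ?(ltW alpha0) ?(ltW alpha1) ?(ltW B0) //.
by rewrite ler_pdivlMr // mulrC.
Qed.

Theorem lemma9 (R : realType) (d : nat) (hd : (2 <= d)%N)
  (D : probability (d.-tuple R * bool)%type R) (DX : probability (d.-tuple R) R)
  (wstar : d.-tuple R) (eta : d.-tuple R -> R)
  (L Rad U beta B alpha : R) :
  unitv wstar ->
  well_behaved DX L Rad U beta ->
  noise_fun D DX wstar eta ->
  0 < B -> 0 < alpha < 1 ->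
  geom_tsybakov wstar eta B alpha ->
  forall t : R, 0 <= t < 1/2 ->
  let s := (t / B) `^ (alpha / (1 - alpha)) in
  (forall gamma : R, 0 < gamma <= expR 1 ->
     (DX [set x | (1/2 - eta x <= t)%R] <=
       (4 * U * beta * s * ln (expR 1 / gamma) + gamma)%:E)%E) /\
  (U * beta * s <= 1 ->
     (DX [set x | (1/2 - eta x <= t)%R] <=
       (4 * U * beta * s * ln (2 / (U * beta * s)))%:E)%E).
Proof.
move=> w1 wb [_ [meta _]] B0 alpha01 tsyb t t01 s.
have [[_ _ U0 beta0] _] := wb.
set A := [set x | 1 / 2 - eta x <= t].
have mA : measurable A.
  rewrite -[X in measurable X]setTI.
  exact: measurable_fun_le (measurable_funB (measurable_cst _) meta) (measurable_cst t).
have A_slab : A `<=` [set x | `|dotp wstar x| <= s].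
  by move=> x; exact: geom_tsybakov_slab x tsyb B0 alpha01 t01.
have s0 : 0 <= s by exact: powR_ge0.
have mass_le := slab_mass_le hd w1 wb mA A_slab s0.
split=> [|x_le1]; first exact: mass_le.
have four_mulA : 4 * U * beta * s = 4 * (U * beta * s) by ring.
rewrite four_mulA; apply: le_4x_ln_2_div => //.
- by rewrite !mulr_ge0 // ltW.
- exact: probability_le1.
- by move=> gamma gamma01; rewrite -four_mulA; exact: mass_le.
Qed.
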